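(* Let $S^2\subset\mathbb{R}^3$ be the unit sphere with the round metric and area form, let $H:S^2\to\mathbb{R}$ be smooth and let $X_H$ be its Hamiltonian vector field. A point $s\in S^2$ is a conformal point of $X_H$ if and only if the second jet $j^2H(s)$ equals the second jet at $s$ of the restriction to $S^2$ of some affine function $d+ax+by+cz$ on $\mathbb{R}^3$ (a first spherical harmonic plus a constant).
   Context: A point $s$ is a conformal point of a vector field $X$ on the Riemannian surface $S^2$ if the linearization $\nabla X(s):T_sS^2\to T_sS^2$ (Levi-Civita covariant derivative) is an infinitesimal similarity, i.e. of the form $\lambda\,\mathrm{Id}+\mu J$ where $J$ is rotation by $90^\circ$; equivalently, the infinitesimal area-preserving map generated by $X$ has derivative at $s$ sending circles to congruent circles. *)

From HB Require Import structures.
From mathcomp Require Import all_boot all_order all_algebra.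
From mathcomp Require Import all_classical all_reals all_analysis.
Set Implicit Arguments. Unset Strict Implicit. Unset Printing Implicit Defensive.
Import Order.TTheory GRing.Theory Num.Theory.
Import numFieldNormedType.Exports.
Local Open Scope ring_scope.

Section S2Defs.
Variable R : realType.
Notation V := ('rV[R]_3).

Definition dot (u v : V) : R := \sum_(i < 3) u 0 i * v 0 i.
Definition cross (u v : V) : V :=
  \row_(i < 3) (u 0 (ordS i) * v 0 (ordS (ordS i))
                - u 0 (ordS (ordS i)) * v 0 (ordS i)).
Definition normalize (p : V) : V := (Num.sqrt (dot p p))^-1 *: p.

Definition on_sphere (s : V) : Prop := dot s s = 1.
Definition tangent (s v : V) : Prop := dot s v = 0.
Definition tproj (s w : V) : V := w - dot w s *: s.
(* rotation by +90 degrees in T_s S^2 (w.r.t. the outward orientation) *)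
Definition Jrot (s v : V) : V := cross s v.

Fixpoint iterD (vs : seq V) (f : V -> R) : V -> R :=
  if vs is v :: vs' then 'D_v (iterD vs' f) else f.
Definition smooth (f : V -> R) : Prop :=
  forall (vs : seq V) (x : V), differentiable (iterD vs f) x.

Definition grad (H : V -> R) (x : V) : V :=
  \row_(i < 3) 'D_(delta_mx 0 i : V) H x.

(* Hamiltonian vector field of H|S^2 w.r.t. the area form
   omega_p(u,v) = dot p (cross u v): it is the unique tangent field with
   omega_p(X_H p, v) = dH_p(v) for tangent v, namely X_H p = cross (grad H p) p.
   (The formula is used on all of R^3 as an extension of X_H off S^2.) *)
Definition hamX (H : V -> R) (x : V) : V := cross (grad H x) x.

(* Levi-Civita covariant derivative of X_H on S^2 at s in direction v *)
Definition covD (H : V -> R) (s v : V) : V := tproj s ('D_v (hamX H) s).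

Definition conformal_point (H : V -> R) (s : V) : Prop :=
  exists lambda mu : R, forall v : V, tangent s v ->
    covD H s v = lambda *: v + mu *: Jrot s v.

Definition chart (s : V) (v : V) : V := normalize (s + v).

(* equality of second jets at s of the restrictions to S^2 of F and G:
   all derivatives of order <= 2 in the chart [chart s] agree at 0 *)
Definition jet2_eq (s : V) (F G : V -> R) : Prop :=
  let F' := F \o chart s in let G' := G \o chart s in
  F' 0 = G' 0 /\
  (forall v, tangent s v -> 'D_v F' 0 = 'D_v G' 0) /\
  (forall v w, tangent s v -> tangent s w ->
     'D_v ('D_w F') 0 = 'D_v ('D_w G') 0).

Definition affine3 (a b c d : R) (p : V) : R :=
  d + a * p 0 0 + b * p 0 1 + c * p 0 2.

End S2Defs.

(* Write [g = grad H s] and [M = hess H s].  The covariant derivative of [X_H]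
   at [s] is [v |-> tproj s (cross (M v) s + cross g v)].  Pairing it with
   [cross s v] shows that it has the form [lambda Id + mu J] on [T_s S^2] only
   if [dot v (M v) = k * dot v v] there; as [M] is symmetric (Schwarz), this
   polarizes to [dot w (M v) = k * dot v w], and conversely such an isotropic
   [M] gives [lambda = 0] and [mu = dot g s - k].  In the central-projection
   chart the 2-jet of [H] at [s] consists of [H s], the tangential part of [g]
   and the form [dot w (M v) - dot v w * dot g s]; for [p |-> d + dot u p] the
   latter is [- dot v w * dot u s], so an affine function with the same 2-jet
   exists iff [M] is isotropic on [T_s S^2]: take [u = g - k s] and
   [d = H s - dot u s]. *)

From HB Require Import structures.
From mathcomp Require Import all_boot all_order all_algebra.
From mathcomp Require Import all_classical all_reals all_analysis.
From mathcomp Require Import ring lra.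
Import Order.TTheory GRing.Theory Num.Theory.
Import numFieldNormedType.Exports.
Local Open Scope ring_scope.

Section Vec3.
Context {R : realType}.
Notation V := 'rV[R]_3.
Implicit Types (s g u v w : V) (M : V -> V).

Definition basis3 (i : 'I_3) : V := delta_mx 0 i.

Lemma ord3P (P : 'I_3 -> Prop) : P 0 -> P 1 -> P 2 -> forall i, P i.
Proof.
move=> P0 P1 P2 [[|[|[|//]]] lti].
- by rewrite (_ : Ordinal lti = 0) //; apply: val_inj.
- by rewrite (_ : Ordinal lti = 1) //; apply: val_inj.
- by rewrite (_ : Ordinal lti = 2) //; apply: val_inj.
Qed.

Lemma row3P u v : u 0 0 = v 0 0 -> u 0 1 = v 0 1 -> u 0 2 = v 0 2 -> u = v.
Proof. by move=> e0 e1 e2; apply/rowP; apply: ord3P. Qed.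

Lemma dotE u v : dot u v = u 0 0 * v 0 0 + u 0 1 * v 0 1 + u 0 2 * v 0 2.
Proof.
rewrite /dot !big_ord_recr big_ord0 /= add0r.
by congr (_ * _ + _ * _ + _ * _); congr (_ _ _); apply: val_inj.
Qed.

Lemma cross_coord0 u v : cross u v 0 0 = u 0 1 * v 0 2 - u 0 2 * v 0 1.
Proof. by rewrite mxE; congr (u 0 _ * v 0 _ - u 0 _ * v 0 _); apply: val_inj. Qed.
Lemma cross_coord1 u v : cross u v 0 1 = u 0 2 * v 0 0 - u 0 0 * v 0 2.
Proof. by rewrite mxE; congr (u 0 _ * v 0 _ - u 0 _ * v 0 _); apply: val_inj. Qed.
Lemma cross_coord2 u v : cross u v 0 2 = u 0 0 * v 0 1 - u 0 1 * v 0 0.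
Proof. by rewrite mxE; congr (u 0 _ * v 0 _ - u 0 _ * v 0 _); apply: val_inj. Qed.

Lemma row3_decomp u : u = u 0 0 *: basis3 0 + u 0 1 *: basis3 1 + u 0 2 *: basis3 2.
Proof. by apply: row3P; rewrite !mxE /=; ring. Qed.

Lemma dotC u v : dot u v = dot v u.
Proof. by rewrite !dotE; ring. Qed.
Lemma dotDl u v w : dot (u + v) w = dot u w + dot v w.
Proof. by rewrite !dotE !mxE; ring. Qed.
Lemma dotDr u v w : dot u (v + w) = dot u v + dot u w.
Proof. by rewrite !dotE !mxE; ring. Qed.
Lemma dotZl (k : R) u v : dot (k *: u) v = k * dot u v.
Proof. by rewrite !dotE !mxE; ring. Qed.
Lemma dotZr (k : R) u v : dot u (k *: v) = k * dot u v.
Proof. by rewrite !dotE !mxE; ring. Qed.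
Lemma dot_basis3 u i : dot u (basis3 i) = u 0 i.
Proof. by move: i; apply: ord3P; rewrite dotE /basis3 !mxE /=; ring. Qed.
Lemma dot0r u : dot u 0 = 0.
Proof. by rewrite dotE !mxE; ring. Qed.
Lemma dot_crossl u v : dot u (cross u v) = 0.
Proof. by rewrite !dotE cross_coord0 cross_coord1 cross_coord2; ring. Qed.
Lemma dot_crossr u v : dot v (cross u v) = 0.
Proof. by rewrite !dotE cross_coord0 cross_coord1 cross_coord2; ring. Qed.
Lemma dot_cross u v u' v' :
  dot (cross u v) (cross u' v') = dot u u' * dot v v' - dot u v' * dot v u'.
Proof. by rewrite !dotE !cross_coord0 !cross_coord1 !cross_coord2; ring. Qed.
Lemma dot_tproj s u v : dot (tproj s u) v = dot u v - dot u s * dot s v.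
Proof. by rewrite /tproj !dotE !mxE; ring. Qed.

End Vec3.

Section TangentAlgebra.
Context {R : realType}.
Notation V := 'rV[R]_3.
Implicit Types (s g u v w : V) (M : V -> V).

Definition similarity_on s (L : V -> V) : Prop :=
  exists lambda mu : R, forall v, tangent s v -> L v = lambda *: v + mu *: cross s v.

Definition isotropic_on s M : Prop :=
  exists k : R, forall v w, tangent s v -> tangent s w -> dot w (M v) = k * dot v w.

Variables (s g : V) (M : V -> V).
Hypothesis s_unit : dot s s = 1.

(* [h], [g] and [M] stand for the value, gradient and Hessian of [H] at [s];
   the left-hand side says that [H] and [p |-> d + dot u p] have the same
   2-jet on the sphere at [s]. *)
Lemma affine_jet_isotropicE (h : R) :
  (exists (u : V) (d : R), [/\ h = d + dot u s,
     forall v, tangent s v -> dot g v = dot u v &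
     forall v w, tangent s v -> tangent s w ->
       dot w (M v) - dot v w * dot g s = - (dot v w * dot u s)])
  <-> isotropic_on s M.
Proof.
split=> [[u [d [_ _ jet2]]] | [k isoM]].
  by exists (dot g s - dot u s) => v w tv tw; have := jet2 v w tv tw; lra.
exists (g + (- k) *: s), (h - dot (g + (- k) *: s) s); split.
- by rewrite subrK.
- by move=> v tv; rewrite dotDl dotZl tv mulr0 addr0.
- by move=> v w tv tw; rewrite isoM // dotDl dotZl s_unit; ring.
Qed.

(* [L] is [covD] at [s] of a field [x |-> cross (G x) x] with [G s = g] and
   ['D_v G s = M v]; [hamX H] is of this form with [G = grad H]. *)
Let L v := tproj s (cross (M v) s + cross g v).

Lemma similarity_quadratic : similarity_on s L ->
  exists k : R, forall v, tangent s v -> dot v (M v) = k * dot v v.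
Proof.
case=> lambda [mu simL]; exists (dot g s - mu) => v tv.
have := congr1 (fun X => dot X (cross s v)) (simL v tv).
rewrite /= dot_tproj !dotDl !dotZl dot_crossl dot_crossr !dot_cross.
rewrite s_unit tv (dotC v s) tv (dotC v (M v)).
lra.
Qed.

Hypothesis M_additive : forall v w, M (v + w) = M v + M w.
Hypothesis M_sym : forall v w, dot w (M v) = dot v (M w).

Lemma quadratic_isotropic (k : R) :
  (forall v, tangent s v -> dot v (M v) = k * dot v v) -> isotropic_on s M.
Proof.
move=> quadM; exists k => v w tv tw.
have tvw : tangent s (v + w) by rewrite /tangent dotDr tv tw addr0.
have := quadM _ tvw; rewrite M_additive !dotDl !dotDr !quadM // (M_sym w v) (dotC w v).
lra.
Qed.

Lemma isotropic_similarity : isotropic_on s M -> similarity_on s L.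
Proof.
case=> k isoM; exists 0, (dot g s - k) => v tv.
(* the i-th coordinate of the defect is the isotropy defect of M tested on
   the tangent vectors [v] and [cross s (basis3 i)] *)
have defectE i : L v 0 i - (0 *: v + (dot g s - k) *: cross s v) 0 i =
    (dot (cross s (basis3 i)) (M v) - k * dot v (cross s (basis3 i)))
    - dot v s * cross s g 0 i + (1 - dot s s) * cross g v 0 i.
  by move: i; apply: ord3P;
    rewrite /L /tproj !(dotE, cross_coord0, cross_coord1, cross_coord2, mxE) /=; ring.
have tsb i : tangent s (cross s (basis3 i)) by apply: dot_crossl.
apply/row3P; apply/eqP; rewrite -subr_eq0 defectE isoM // s_unit (dotC v s) tv;
  apply/eqP; ring.
Qed.

Lemma similarity_isotropicE : similarity_on s L <-> isotropic_on s M.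
Proof.
split; last exact: isotropic_similarity.
by move=> /similarity_quadratic [k]; apply: quadratic_isotropic.
Qed.

End TangentAlgebra.

Section ChainRule.
Context {R : realType} {U V W : normedModType R}.

Lemma derive_comp (c : U -> V) (G : V -> W) u w :
  differentiable c u -> differentiable G (c u) ->
  'D_w (G \o c) u = 'D_('D_w c u) G (c u).
Proof.
move=> dc dG; rewrite deriveE; last exact: differentiable_comp.
by rewrite diff_comp // (deriveE w dc) (deriveE _ dG).
Qed.

Lemma derivable_comp (c : U -> V) (G : V -> W) u w :
  differentiable c u -> differentiable G (c u) -> derivable (G \o c) u w.
Proof. by move=> dc dG; apply/diff_derivable/differentiable_comp. Qed.

Lemma derive_dirR (f : R -> R) (y a : R) :
  differentiable f y -> 'D_a f y = a * 'D_1 f y.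
Proof.
move=> df; rewrite !deriveE // -[in LHS](mulr1 a) -[a * 1]/(a *: (1 : R)).
by rewrite linearZ.
Qed.

Lemma differentiable_sqrt (y : R) : 0 < y -> differentiable (@Num.sqrt R) y.
Proof. by move=> y0; apply/derivable1_diffP; case: (is_derive1_sqrt y0). Qed.

End ChainRule.

Section Schwarz.
Context {R : realType} {E : normedModType R}.
Implicit Types (f : E -> R) (x v w : E).

Lemma is_derive_line f v y (t : R) : differentiable f (t *: v + y) ->
  is_derive t 1 (fun t : R => f (t *: v + y)) ('D_v f (t *: v + y)).
Proof.
move=> df; pose l (t : R) := t *: v + y.
have dl (r : R) : differentiable l r by apply: differentiableD.
have Dl : 'D_1 l t = v.
  rewrite deriveE // diffD // /= diff_val (diff_cst y t) scale1r.
  by rewrite [X in v + X](_ : _ = 0) ?addr0.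
apply: (@DeriveDef _ _ _ _ _ (f \o l)); first exact: derivable_comp.
by rewrite derive_comp // Dl.
Qed.

Lemma second_difference_mvt f x v w (h : R) : 0 < h ->
  (forall y, differentiable f y) -> (forall y, differentiable ('D_v f) y) ->
  exists a b, [/\ 0 <= a <= h, 0 <= b <= h &
   f (x + h *: v + h *: w) - f (x + h *: v) - f (x + h *: w) + f x
     = h ^+ 2 * 'D_w ('D_v f) (x + a *: v + b *: w)].
Proof.
move=> h0 df ddf.
pose phi t := f (t *: v + (x + h *: w)) - f (t *: v + x).
have dphi (t : R) : is_derive t 1 phi
    ('D_v f (t *: v + (x + h *: w)) - 'D_v f (t *: v + x)).
  by apply: is_deriveB; apply: is_derive_line.
have [a a0h phiE] := MVT_segment (ltW h0) (fun t _ => dphi t)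
  (derivable_within_continuous (fun t _ => let: DeriveDef dp _ := dphi t in dp)).
pose psi r := 'D_v f (r *: w + (a *: v + x)).
have dpsi (r : R) : is_derive r 1 psi ('D_w ('D_v f) (r *: w + (a *: v + x))).
  exact: is_derive_line.
have [b b0h psiE] := MVT_segment (ltW h0) (fun t _ => dpsi t)
  (derivable_within_continuous (fun t _ => let: DeriveDef dp _ := dpsi t in dp)).
exists a, b; split; [by move: a0h; rewrite in_itv | by move: b0h; rewrite in_itv |].
move: phiE psiE; rewrite /phi /psi !scale0r !add0r !subr0.
have -> : a *: v + (x + h *: w) = h *: w + (a *: v + x) by rewrite [RHS]addrC -addrA.
move=> phiE psiE; rewrite psiE in phiE.
have e1 : h *: v + (x + h *: w) = x + h *: v + h *: w by rewrite addrCA addrA.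
have e2 : b *: w + (a *: v + x) = x + a *: v + b *: w by rewrite addrC (addrC (a *: v)).
rewrite e1 e2 (addrC (h *: v)) in phiE.
by rewrite [in RHS]expr2 [in RHS]mulrC mulrA -phiE; ring.
Qed.

Lemma schwarz f x v w :
  (forall y, differentiable f y) -> (forall y, differentiable ('D_v f) y) ->
  (forall y, differentiable ('D_w f) y) ->
  {for x, continuous ('D_w ('D_v f))} -> {for x, continuous ('D_v ('D_w f))} ->
  'D_v ('D_w f) x = 'D_w ('D_v f) x.
Proof.
move=> df dvf dwf cF cG.
pose F : E -> R := 'D_w ('D_v f); pose G : E -> R := 'D_v ('D_w f).
change (G x = F x); change {for x, continuous F} in cF.
change {for x, continuous G} in cG.
apply/eqP; rewrite -subr_eq0 -normr_le0; apply/ler_addgt0Pr => e e0.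
have e2 : 0 < e / 2 by rewrite divr_gt0.
have [r r0 nearF] := (nbhs_ballP _ _).1 (cvgr_dist_lt _ _ cF _ e2).
have [r' r'0 nearG] := (nbhs_ballP _ _).1 (cvgr_dist_lt _ _ cG _ e2).
pose m := Num.min r r'; pose h := m / (`|v| + `|w| + 1).
have m0 : 0 < m by rewrite lt_min r0 r'0.
have h0 : 0 < h by rewrite divr_gt0 // ltr_wpDl // addr_ge0.
have near_x a b : 0 <= a <= h -> 0 <= b <= h -> ball x m (x + a *: v + b *: w).
  move=> /andP[a0 ah] /andP[b0 bh].
  rewrite -ball_normE /ball_ /= -addrA opprD addrA subrr sub0r normrN.
  apply: (le_lt_trans (ler_normD _ _)); rewrite !normrZ !ger0_norm //.
  apply: (@le_lt_trans _ _ (h * (`|v| + `|w|))).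
    by rewrite mulrDr lerD // ler_wpM2r.
  rewrite /h mulrAC ltr_pdivrMr ?ltr_wpDl ?addr_ge0 // ltr_pM2l //.
  by rewrite ltrDl.
have [a [b [ha hb Fab]]] := second_difference_mvt f x v w h h0 df dvf.
have [a' [b' [ha' hb' Gab]]] := second_difference_mvt f x w v h h0 df dwf.
have FG : F (x + a *: v + b *: w) = G (x + a' *: w + b' *: v).
  apply: (mulfI (expf_neq0 2 (lt0r_neq0 h0))).
  apply: etrans (esym Fab) (etrans _ Gab).
  by rewrite (addrAC x (h *: w)); ring.
have mr : m <= r by rewrite ge_min lexx.
have mr' : m <= r' by rewrite ge_min lexx orbT.
have := nearF _ (le_ball mr (near_x _ _ ha hb)).
have := nearG _ (le_ball mr' (near_x _ _ hb' ha')); rewrite (addrAC x (b' *: v)).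
rewrite /= -FG add0r; move: (F _) (F x) (G x) => Fp Fx Gx dG dF.
apply: le_trans (ler_distD Fp Gx Fx) _.
by rewrite (distrC Fp) [e]splitr; apply: lerD; apply: ltW.
Qed.

End Schwarz.

Section Calculus3.
Context {R : realType}.
Notation V := 'rV[R]_3.
Implicit Types (f g H : V -> R) (x u v w : V).

(* [deriveD], [deriveB], [deriveM] in the pointwise form needed to rewrite
   derivatives of lambda terms *)
Lemma derive_add [f g x v] : derivable f x v -> derivable g x v ->
  'D_v (fun y => f y + g y) x = 'D_v f x + 'D_v g x.
Proof. exact: deriveD. Qed.
Lemma derive_sub [f g x v] : derivable f x v -> derivable g x v ->
  'D_v (fun y => f y - g y) x = 'D_v f x - 'D_v g x.
Proof. exact: deriveB. Qed.
Lemma derive_mul [f g x v] : derivable f x v -> derivable g x v ->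
  'D_v (fun y => f y * g y) x = 'D_v f x * g x + f x * 'D_v g x.
Proof. by move=> df dg; rewrite (deriveM df dg) /GRing.scale /= addrC mulrC. Qed.

Lemma derivable_add [f g x v] : derivable f x v -> derivable g x v ->
  derivable (fun y => f y + g y) x v.
Proof. exact: derivableD. Qed.
Lemma derivable_sub [f g x v] : derivable f x v -> derivable g x v ->
  derivable (fun y => f y - g y) x v.
Proof. exact: derivableB. Qed.
Lemma derivable_mul [f g x v] : derivable f x v -> derivable g x v ->
  derivable (fun y => f y * g y) x v.
Proof. exact: derivableM. Qed.

Lemma derive_coord (i : 'I_3) x v : 'D_v (fun y : V => y 0 i) x = v 0 i.
Proof.
have := derive_mx (@derivable_id _ V x v); rewrite derive_id.
by move=> /(congr1 (fun M : V => M 0 i)); rewrite mxE.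
Qed.

Lemma derivable_coord (i : 'I_3) x v : derivable (fun y : V => y 0 i) x v.
Proof. exact/diff_derivable/differentiable_coord. Qed.

Lemma derive_rV3_coord (F : V -> V) x v j :
  derivable F x v -> 'D_v F x 0 j = 'D_v (fun y => F y 0 j) x.
Proof. by move=> dF; rewrite derive_mx // mxE. Qed.

Lemma derive_decomp f x v : differentiable f x ->
  'D_v f x = v 0 0 * 'D_(basis3 0) f x + v 0 1 * 'D_(basis3 1) f x
             + v 0 2 * 'D_(basis3 2) f x.
Proof. by move=> df; rewrite !deriveE // {1}(row3_decomp v) !linearD !linearZ. Qed.

Lemma deriveDv f x v w : differentiable f x -> 'D_(v + w) f x = 'D_v f x + 'D_w f x.
Proof. by move=> df; rewrite !deriveE // linearD. Qed.

Lemma differentiable_rV3 (F : V -> V) x :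
  (forall i, differentiable (fun y => F y 0 i) x) -> differentiable F x.
Proof.
move=> dF; have -> : F = fun y => F y 0 0 *: basis3 0 + F y 0 1 *: basis3 1 + F y 0 2 *: basis3 2.
  by apply/funext => y; rewrite -row3_decomp.
by apply: differentiableD; first apply: differentiableD; apply: differentiableZl.
Qed.

Lemma smooth_differentiable H x : smooth H -> differentiable H x.
Proof. by move=> sH; apply: (sH [::]). Qed.
Lemma smooth_differentiable1 H v x : smooth H -> differentiable ('D_v H) x.
Proof. by move=> sH; apply: (sH [:: v]). Qed.
Lemma smooth_differentiable2 H v w x : smooth H -> differentiable ('D_v ('D_w H)) x.
Proof. by move=> sH; apply: (sH [:: v; w]). Qed.

End Calculus3.

Section Hessian.
Context {R : realType}.
Notation V := 'rV[R]_3.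
Implicit Types (H : V -> R) (s x v w : V).

Definition hess H x v : V := \row_j 'D_v ('D_(basis3 j) H) x.

Lemma hessE H x v j : hess H x v 0 j = 'D_v ('D_(basis3 j) H) x.
Proof. by rewrite mxE. Qed.

Lemma gradE H x j : grad H x 0 j = 'D_(basis3 j) H x.
Proof. by rewrite mxE. Qed.

Lemma derive_grad H x v : differentiable H x -> 'D_v H x = dot (grad H x) v.
Proof.
move=> dH; rewrite derive_decomp // dotE !gradE.
by move: ('D_(basis3 0) H x) ('D_(basis3 1) H x) ('D_(basis3 2) H x) => a b c; ring.
Qed.

Definition sphere_hess H s v w : R :=
  dot w (hess H s v) - dot v w * dot (grad H s) s.

Variable H : V -> R.
Hypothesis smoothH : smooth H.

Lemma derive_hamX x v :
  'D_v (hamX H) x = cross (hess H x v) x + cross (grad H x) v.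
Proof.
pose P k l (y : V) := 'D_(basis3 k) H y * y 0 l.
have hamXE (i : 'I_1) j : (fun y => hamX H y i j) =
    fun y => P (ordS j) (ordS (ordS j)) y - P (ordS (ordS j)) (ordS j) y.
  by apply/funext => y; rewrite /hamX /cross /grad !mxE.
have dD k : derivable ('D_(basis3 k) H) x v.
  exact/diff_derivable/smooth_differentiable1.
have dP k l : derivable (P k l) x v by apply: derivable_mul; last exact: derivable_coord.
have dhamX : derivable (hamX H) x v.
  by apply/derivable_mxP => i j; rewrite hamXE; apply: derivable_sub.
rewrite derive_mx //; apply/matrixP => i j; rewrite !mxE hamXE derive_sub //.
by rewrite /P !(derive_mul (dD _) (derivable_coord _ x v)) !derive_coord opprD addrACA.
Qed.

Lemma hessD x v w : hess H x (v + w) = hess H x v + hess H x w.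
Proof.
apply/rowP => j; rewrite hessE mxE deriveDv; last exact: smooth_differentiable1.
by congr (_ + _); apply/esym/hessE.
Qed.

Lemma dot_hess x v w : dot w (hess H x v) = 'D_v ('D_w H) x.
Proof.
have dD j : derivable ('D_(basis3 j) H) x v.
  exact/diff_derivable/smooth_differentiable1.
have dwD j : derivable (fun y => cst (w 0 j) y * 'D_(basis3 j) H y) x v.
  exact: derivable_mul (derivable_cst _ x v) (dD j).
have -> : 'D_w H = fun y => cst (w 0 0) y * 'D_(basis3 0) H y
    + cst (w 0 1) y * 'D_(basis3 1) H y + cst (w 0 2) y * 'D_(basis3 2) H y.
  by apply/funext => y; rewrite derive_decomp //; apply: smooth_differentiable.
rewrite (derive_add (derivable_add (dwD 0) (dwD 1)) (dwD 2)).
rewrite (derive_add (dwD 0) (dwD 1)) !(derive_mul (derivable_cst _ x v) (dD _)).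
rewrite !derive_cst dotE !hessE /cst.
move: ('D_v ('D_(basis3 0) H) x) ('D_v ('D_(basis3 1) H) x) ('D_v ('D_(basis3 2) H) x).
by move=> a b c; ring.
Qed.

Lemma hess_sym x v w : dot w (hess H x v) = dot v (hess H x w).
Proof.
rewrite !dot_hess; apply: schwarz => [y|y|y||];
  by [apply: smooth_differentiable | apply: smooth_differentiable1
     | apply/differentiable_continuous/smooth_differentiable2].
Qed.

Lemma covD_hess s :
  covD H s = fun v => tproj s (cross (hess H s v) s + cross (grad H s) v).
Proof. by apply/funext => v; rewrite /covD derive_hamX. Qed.

Lemma conformal_point_isotropic s : on_sphere s ->
  conformal_point H s <-> isotropic_on s (hess H s).
Proof.
move=> s_unit; change (similarity_on s (covD H s) <-> isotropic_on s (hess H s)).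
rewrite covD_hess; exact: similarity_isotropicE s_unit (hessD s) (hess_sym s).
Qed.

End Hessian.

Section SecondOrderChainRule.
Context {R : realType}.
Notation V := 'rV[R]_3.

Lemma derive2_comp (G : V -> R) (c : V -> V) (x v w : V) :
  (forall y, differentiable G y) ->
  (forall j y, differentiable ('D_(basis3 j) G) y) ->
  (\forall u \near x, differentiable c u) -> derivable ('D_w c) x v ->
  'D_v ('D_w (G \o c)) x =
    dot ('D_v ('D_w c) x) (grad G (c x)) + dot ('D_w c x) (hess G (c x) ('D_v c x)).
Proof.
move=> dG dDG near_dc dDcv.
rewrite !dotE !gradE !hessE !(derive_rV3_coord _ _ _ _ dDcv).
have dDc j : derivable (fun u => 'D_w c u 0 j) x v by move/derivable_mxP: dDcv.
have dcx : differentiable c x by exact: (nbhs_singleton near_dc).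
have DGcE : \forall u \near x, 'D_w (G \o c) u =
    'D_w c u 0 0 * 'D_(basis3 0) G (c u) + 'D_w c u 0 1 * 'D_(basis3 1) G (c u)
    + 'D_w c u 0 2 * 'D_(basis3 2) G (c u).
  by apply: filterS near_dc => u du; rewrite derive_comp // derive_decomp.
rewrite (near_eq_derive v DGcE).
have dDGc j : derivable (fun u => 'D_(basis3 j) G (c u)) x v.
  exact: (@derivable_comp _ _ _ _ c ('D_(basis3 j) G)).
have DDGcE j : 'D_v (fun u => 'D_(basis3 j) G (c u)) x
    = 'D_('D_v c x) ('D_(basis3 j) G) (c x).
  exact: (@derive_comp _ _ _ _ c ('D_(basis3 j) G)).
have dP j : derivable (fun u => 'D_w c u 0 j * 'D_(basis3 j) G (c u)) x v.
  exact: derivable_mul (dDc j) (dDGc j).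
rewrite (derive_add (derivable_add (dP 0) (dP 1)) (dP 2)) (derive_add (dP 0) (dP 1)).
rewrite (derive_mul (dDc 0) (dDGc 0)) (derive_mul (dDc 1) (dDGc 1)).
rewrite (derive_mul (dDc 2) (dDGc 2)) (DDGcE 0) (DDGcE 1) (DDGcE 2).
move: ('D_v (fun u => 'D_w c u 0 0) x) ('D_v (fun u => 'D_w c u 0 1) x).
move: ('D_v (fun u => 'D_w c u 0 2) x) => a2 a1 a0.
move: ('D_w c x 0 0) ('D_w c x 0 1) ('D_w c x 0 2) => b0 b1 b2.
move: ('D_(basis3 0) G (c x)) ('D_(basis3 1) G (c x)) ('D_(basis3 2) G (c x)) => g0 g1 g2.
move: ('D_('D_v c x) ('D_(basis3 0) G) (c x)) ('D_('D_v c x) ('D_(basis3 1) G) (c x)).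
move: ('D_('D_v c x) ('D_(basis3 2) G) (c x)) => h2 h1 h0.
ring.
Qed.

End SecondOrderChainRule.

Section Chart.
Context {R : realType}.
Notation V := 'rV[R]_3.
Variable s : V.
Hypothesis s_unit : dot s s = 1.
Implicit Types (u v w : V).

Let su (i : 'I_3) u := s 0 i + u 0 i.
Let nsq u := su 0 u * su 0 u + su 1 u * su 1 u + su 2 u * su 2 u.
Let rho u := (Num.sqrt (nsq u))^-1.
Let sdot w u := su 0 u * w 0 0 + su 1 u * w 0 1 + su 2 u * w 0 2.

Lemma chart_coord u i : chart s u 0 i = rho u * su i u.
Proof. by rewrite /chart /normalize dotE !mxE. Qed.

Lemma differentiable_su i u : differentiable (su i) u.
Proof. by apply: differentiableD => //; apply: differentiable_coord. Qed.

Lemma derivable_su i u w : derivable (su i) u w.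
Proof. exact/diff_derivable/differentiable_su. Qed.

Lemma derive_su i u w : 'D_w (su i) u = w 0 i.
Proof.
rewrite /su (derive_add (derivable_cst _ u w) (derivable_coord _ u w)).
by rewrite derive_cst derive_coord add0r.
Qed.

Lemma differentiable_nsq u : differentiable nsq u.
Proof.
by apply: differentiableD; [apply: differentiableD|];
  apply: differentiableM; apply: differentiable_su.
Qed.

Lemma derive_nsq u w : 'D_w nsq u = 2 * sdot w u.
Proof.
have dsq i : derivable (fun u => su i u * su i u) u w.
  by apply: derivable_mul; apply: derivable_su.
rewrite /nsq (derive_add (derivable_add (dsq 0) (dsq 1)) (dsq 2)).
rewrite (derive_add (dsq 0) (dsq 1)) !(derive_mul (derivable_su _ _ _) (derivable_su _ _ _)).
rewrite !derive_su /sdot.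
by move: (su 0 u) (su 1 u) (su 2 u) => a b c; ring.
Qed.

Lemma differentiable_sqrt_nsq u : 0 < nsq u -> differentiable (fun u => Num.sqrt (nsq u)) u.
Proof.
move=> nsq0; apply: (@differentiable_comp _ _ _ _ nsq); first exact: differentiable_nsq.
exact: differentiable_sqrt.
Qed.

Lemma derive_sqrt_nsq u w : 0 < nsq u ->
  'D_w (fun u => Num.sqrt (nsq u)) u = sdot w u / Num.sqrt (nsq u).
Proof.
move=> nsq0; have -> : (fun u => Num.sqrt (nsq u)) = Num.sqrt \o nsq by [].
rewrite derive_comp; [|exact: differentiable_nsq|exact: differentiable_sqrt].
rewrite derive_dirR; last exact: differentiable_sqrt.
rewrite derive_sqrt // derive_nsq.
have sq0 : Num.sqrt (nsq u) != 0 by rewrite gt_eqF // sqrtr_gt0.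
by move: (Num.sqrt (nsq u)) sq0 (sdot w u) => r r0 l; field.
Qed.

Lemma differentiable_rho u : 0 < nsq u -> differentiable rho u.
Proof.
move=> nsq0; apply: differentiableV; first exact: differentiable_sqrt_nsq.
by rewrite gt_eqF // sqrtr_gt0.
Qed.

Lemma derive_rho u w : 0 < nsq u ->
  'D_w rho u = - sdot w u * (rho u * (rho u * rho u)).
Proof.
move=> nsq0; rewrite /rho deriveV; last exact/diff_derivable/differentiable_sqrt_nsq.
  2: by rewrite gt_eqF // sqrtr_gt0.
rewrite derive_sqrt_nsq //.
have sq0 : Num.sqrt (nsq u) != 0 by rewrite gt_eqF // sqrtr_gt0.
move: (Num.sqrt (nsq u)) sq0 (sdot w u) => r r0 l.
by rewrite /GRing.scale /=; field.
Qed.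

Lemma differentiable_chart u : 0 < nsq u -> differentiable (chart s) u.
Proof.
move=> nsq0; apply: differentiable_rV3 => i.
have -> : (fun u => chart s u 0 i) = (fun u => rho u * su i u).
  by apply/funext => y; rewrite chart_coord.
by apply: differentiableM; [apply: differentiable_rho | apply: differentiable_su].
Qed.

Let dchart w (j : 'I_3) u :=
  rho u * w 0 j - sdot w u * (rho u * (rho u * rho u)) * su j u.

Lemma derive_chart_coord u w j : 0 < nsq u -> 'D_w (chart s) u 0 j = dchart w j u.
Proof.
move=> nsq0; rewrite derive_mx; last exact/diff_derivable/differentiable_chart.
rewrite mxE.
have -> : (fun u => chart s u 0 j) = (fun u => rho u * su j u).
  by apply/funext => y; rewrite chart_coord.
have drho : derivable rho u w by exact/diff_derivable/differentiable_rho.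
rewrite (derive_mul drho (derivable_su _ _ _)) derive_su derive_rho // /dchart.
by move: (sdot w u) (rho u) (su j u) (w 0 j) => a b c d; ring.
Qed.

Lemma nsq0 : nsq 0 = 1.
Proof. by rewrite -s_unit dotE /nsq /su !mxE !addr0. Qed.
Lemma rho0 : rho 0 = 1.
Proof. by rewrite /rho nsq0 sqrtr1 invr1. Qed.
Lemma su0 i : su i 0 = s 0 i.
Proof. by rewrite /su mxE addr0. Qed.
Lemma sdot0 w : sdot w 0 = dot s w.
Proof. by rewrite /sdot !su0 dotE. Qed.
Lemma nsq0_gt0 : 0 < nsq 0.
Proof. by rewrite nsq0 ltr01. Qed.

Lemma near0_nsq_gt0 : \forall u \near (0 : V), 0 < nsq u.
Proof.
have cnsq : {for 0, continuous nsq} := differentiable_continuous (differentiable_nsq 0).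
exact: (cvgr_gt (nsq 0) cnsq 0 nsq0_gt0).
Qed.

Lemma chart0 : chart s 0 = s.
Proof. by rewrite /chart /normalize addr0 s_unit sqrtr1 invr1 scale1r. Qed.

Lemma derive_chart0 v : tangent s v -> 'D_v (chart s) 0 = v.
Proof.
move=> tv; apply: row3P; rewrite derive_chart_coord ?nsq0_gt0 // /dchart sdot0 tv rho0;
  ring.
Qed.

Lemma derivable_sdot u v w : derivable (sdot w) u v.
Proof.
rewrite /sdot; apply: derivable_add; first apply: derivable_add.
all: apply: derivable_mul; [exact: derivable_su | exact: derivable_cst].
Qed.

Lemma derive_sdot u v w : 'D_v (sdot w) u = dot v w.
Proof.
have dm i : derivable (fun u => su i u * cst (w 0 i) u) u v.
  by apply: derivable_mul; [exact: derivable_su | exact: derivable_cst].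
rewrite /sdot (derive_add (derivable_add (dm 0) (dm 1)) (dm 2)) (derive_add (dm 0) (dm 1)).
rewrite !(derive_mul (derivable_su _ _ _) (derivable_cst _ _ _)) !derive_su !derive_cst dotE /cst.
by move: (su 0 u) (su 1 u) (su 2 u) => a b c; ring.
Qed.

Lemma near0_derive_chart w j :
  \forall u \near (0 : V), 'D_w (chart s) u 0 j = dchart w j u.
Proof. by apply: filterS near0_nsq_gt0 => u; apply: derive_chart_coord. Qed.

Lemma derivable_dchart v w j : derivable (dchart w j) 0 v.
Proof.
have drho : derivable rho 0 v by exact/diff_derivable/differentiable_rho/nsq0_gt0.
have drho3 := derivable_mul drho (derivable_mul drho drho).
exact: derivable_sub (derivable_mul drho (derivable_cst (w 0 j) _ _))
  (derivable_mul (derivable_mul (derivable_sdot _ _ _) drho3) (derivable_su j _ _)).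
Qed.

Lemma derive_dchart0 v w j : tangent s v -> tangent s w ->
  'D_v (dchart w j) 0 = - (dot v w * s 0 j).
Proof.
move=> tv tw.
have drho : derivable rho 0 v by exact/diff_derivable/differentiable_rho/nsq0_gt0.
have drho2 : derivable (fun u => rho u * rho u) 0 v := derivable_mul drho drho.
have drho3 : derivable (fun u => rho u * (rho u * rho u)) 0 v := derivable_mul drho drho2.
have dsrho3 := derivable_mul (derivable_sdot 0 v w) drho3.
rewrite /dchart (derive_sub (derivable_mul drho (derivable_cst (w 0 j) _ _))
                             (derivable_mul dsrho3 (derivable_su j _ _))).
rewrite (derive_mul drho (derivable_cst _ _ _)) (derive_mul dsrho3 (derivable_su _ _ _)).
rewrite (derive_mul (derivable_sdot _ _ _) drho3) (derive_mul drho drho2).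
rewrite (derive_mul drho drho) derive_cst derive_su derive_sdot derive_rho ?nsq0_gt0 //.
rewrite rho0 !sdot0 tv tw su0 /cst.
by move: (dot v w) (s 0 j) (v 0 j) (w 0 j) => a b c d; ring.
Qed.

Lemma derivable_derive_chart0 v w : derivable ('D_w (chart s)) 0 v.
Proof.
apply/derivable_mxP => i j; rewrite (ord1 i).
apply: near_eq_derivable (derivable_dchart v w j).
by apply: filterS (near0_derive_chart w j) => u ->.
Qed.

Lemma derive2_chart0 v w : tangent s v -> tangent s w ->
  'D_v ('D_w (chart s)) 0 = - dot v w *: s.
Proof.
move=> tv tw; apply/rowP => j.
rewrite derive_rV3_coord; last exact: derivable_derive_chart0.
by rewrite (near_eq_derive v (near0_derive_chart w j)) derive_dchart0 // !mxE mulNr.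
Qed.

Lemma chart_jet (G : V -> R) v w :
  (forall y, differentiable G y) -> (forall j y, differentiable ('D_(basis3 j) G) y) ->
  tangent s v -> tangent s w ->
  [/\ (G \o chart s) 0 = G s,
     'D_v (G \o chart s) 0 = dot (grad G s) v &
     'D_v ('D_w (G \o chart s)) 0 = sphere_hess G s v w].
Proof.
move=> dG dDG tv tw.
have dc0 : differentiable (chart s) 0 := differentiable_chart 0 nsq0_gt0.
have near_dc : \forall u \near (0 : V), differentiable (chart s) u.
  by apply: filterS near0_nsq_gt0 => u; apply: differentiable_chart.
split.
- by rewrite /= chart0.
- by rewrite derive_comp // chart0 derive_chart0 // derive_grad.
rewrite (derive2_comp G (chart s) 0 v w dG dDG near_dc (derivable_derive_chart0 v w)).
rewrite chart0 derive2_chart0 // !derive_chart0 // /sphere_hess dotZl (dotC s).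
by rewrite mulNr addrC.
Qed.

End Chart.

Section Jets.
Context {R : realType}.
Notation V := 'rV[R]_3.
Implicit Types (F G H : V -> R) (s u v w : V).

Lemma jet2_eqE s F G : on_sphere s ->
  (forall y, differentiable F y) -> (forall j y, differentiable ('D_(basis3 j) F) y) ->
  (forall y, differentiable G y) -> (forall j y, differentiable ('D_(basis3 j) G) y) ->
  jet2_eq s F G <->
  [/\ F s = G s,
      forall v, tangent s v -> dot (grad F s) v = dot (grad G s) v &
      forall v w, tangent s v -> tangent s w -> sphere_hess F s v w = sphere_hess G s v w].
Proof.
move=> s_unit dF dDF dG dDG.
have JF v w (tv : tangent s v) (tw : tangent s w) := chart_jet s s_unit F v w dF dDF tv tw.
have JG v w (tv : tangent s v) (tw : tangent s w) := chart_jet s s_unit G v w dG dDG tv tw.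
have t0 : tangent s 0 by rewrite /tangent dot0r.
have [F0 _ _] := JF 0 0 t0 t0; have [G0 _ _] := JG 0 0 t0 t0.
split=> [[e0 [e1 e2]] | [e0 e1 e2]].
- split=> [|v tv|v w tv tw].
  + by rewrite -F0 -G0.
  + by have [_ <- _] := JF v v tv tv; have [_ <- _] := JG v v tv tv; apply: e1.
  + by have [_ _ <-] := JF v w tv tw; have [_ _ <-] := JG v w tv tw; apply: e2.
- split; [by rewrite F0 G0 | split=> [v tv|v w tv tw]].
  + by have [_ -> _] := JF v v tv tv; have [_ -> _] := JG v v tv tv; apply: e1.
  + by have [_ _ ->] := JF v w tv tw; have [_ _ ->] := JG v w tv tw; apply: e2.
Qed.

Definition affine u (d : R) (p : V) : R := d + dot u p.

Lemma derive_affine u d p v : 'D_v (affine u d) p = dot u v.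
Proof.
have dm i : derivable (fun y : V => cst (u 0 i) y * y 0 i) p v.
  exact: derivable_mul (derivable_cst _ p v) (derivable_coord i p v).
have -> : affine u d = fun y => cst d y
    + (cst (u 0 0) y * y 0 0 + cst (u 0 1) y * y 0 1 + cst (u 0 2) y * y 0 2).
  by apply/funext => y; rewrite /affine dotE.
rewrite (derive_add (derivable_cst _ p v) (derivable_add (derivable_add (dm 0) (dm 1)) (dm 2))).
rewrite (derive_add (derivable_add (dm 0) (dm 1)) (dm 2)) (derive_add (dm 0) (dm 1)).
rewrite !(derive_mul (derivable_cst _ p v) (derivable_coord _ p v)) !derive_cst !derive_coord.
by rewrite dotE /cst; move: (u 0 0) (u 0 1) (u 0 2) => a b c; ring.
Qed.

Lemma derive_basis3_affine u d j : 'D_(basis3 j) (affine u d) = cst (u 0 j).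
Proof.
by apply/funext => p; rewrite derive_affine dot_basis3.
Qed.

Lemma differentiable_affine u d p : differentiable (affine u d) p.
Proof.
rewrite /affine; apply: differentiableD => //.
rewrite (_ : dot u = fun y => u 0 0 * y 0 0 + u 0 1 * y 0 1 + u 0 2 * y 0 2).
  by apply: differentiableD; first apply: differentiableD;
    apply: differentiableM => //; apply: differentiable_coord.
by apply/funext => y; rewrite dotE.
Qed.

Lemma grad_affine u d s : grad (affine u d) s = u.
Proof. by apply/rowP => j; rewrite gradE derive_affine dot_basis3. Qed.

Lemma sphere_hess_affine u d s :
  sphere_hess (affine u d) s = fun v w => - (dot v w * dot u s).
Proof.
apply/funext => v; apply/funext => w.
have hess0 : hess (affine u d) s v = 0.
  by apply/rowP => j; rewrite hessE derive_basis3_affine derive_cst mxE.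
by rewrite /sphere_hess hess0 grad_affine dot0r sub0r.
Qed.

Lemma jet2_affineE H s u d : smooth H -> on_sphere s ->
  jet2_eq s H (affine u d) <->
  [/\ H s = d + dot u s,
      forall v, tangent s v -> dot (grad H s) v = dot u v &
      forall v w, tangent s v -> tangent s w -> sphere_hess H s v w = - (dot v w * dot u s)].
Proof.
move=> sH s_unit.
have dH y := smooth_differentiable H y sH.
have dDH j y := smooth_differentiable1 H (basis3 j) y sH.
have dDA j y : differentiable ('D_(basis3 j) (affine u d)) y.
  by rewrite derive_basis3_affine; apply: differentiable_cst.
rewrite (jet2_eqE s H (affine u d) s_unit dH dDH (differentiable_affine u d) dDA).
by rewrite grad_affine sphere_hess_affine.
Qed.

Lemma exists_affine3 (P : (V -> R) -> Prop) :
  (exists a b c d : R, P (affine3 a b c d)) <-> exists u d, P (affine u d).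
Proof.
have affine3E a b c d : affine3 a b c d = affine (\row_i [:: a; b; c]`_i) d.
  by apply/funext => p; rewrite /affine3 /affine dotE !mxE /= addrA addrA.
split=> [[a [b [c [d Pabcd]]]] | [u [d Pud]]].
  by exists (\row_i [:: a; b; c]`_i), d; rewrite -affine3E.
exists (u 0 0), (u 0 1), (u 0 2), d; rewrite affine3E.
suff -> : \row_i [:: u 0 0; u 0 1; u 0 2]`_i = u by [].
by apply: row3P; rewrite !mxE.
Qed.

Lemma jet2_affine_isotropic H s : smooth H -> on_sphere s ->
  (exists a b c d : R, jet2_eq s H (affine3 a b c d)) <-> isotropic_on s (hess H s).
Proof.
move=> sH s_unit; rewrite exists_affine3.
rewrite -(affine_jet_isotropicE s (grad H s) (hess H s) s_unit (H s)).
split=> -[u [d jet]]; exists u, d; first by apply/(jet2_affineE H s u d sH s_unit).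
exact/(jet2_affineE H s u d sH s_unit).
Qed.

End Jets.

Theorem lemma5 (R : realType) (H : 'rV[R]_3 -> R) (s : 'rV[R]_3) :
  smooth H -> on_sphere s ->
  (conformal_point H s <->
   exists a b c d : R, jet2_eq s H (affine3 a b c d)).
Proof.
move=> sH s_unit.
exact: iff_trans (conformal_point_isotropic H sH s s_unit)
                 (iff_sym (jet2_affine_isotropic H s sH s_unit)).
Qed.
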